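(* Assume the root datum is $X$-regular and $\phi$ is an enhancer. Let $\lambda,\lambda'\in X^+$, $\Lambda_\lambda=\{\lambda-\nu':\nu\in\mathbb N[I]\}$ and $V_{\lambda'}=\{\nu'-\lambda':\nu\in\mathbb N[I]\}$, and for $\zeta=\lambda-\nu'\in\Lambda_\lambda$ set $p(\zeta)=p(\nu)$. Then there is a function $\varkappa=\varkappa_{\lambda,\lambda'}:\Lambda_\lambda\times V_{\lambda'}\to\mathbb Z$ such that, modulo $4$ and for all $i\in I$, $\zeta\in\Lambda_\lambda$, $\zeta'\in V_{\lambda'}$ (with $\zeta-i'\in\Lambda_\lambda$, $\zeta'+i'\in V_{\lambda'}$ automatically): (1) $\varkappa(\zeta-i',\zeta')\equiv\varkappa(\zeta,\zeta')-\phi(i,\zeta')$; (2) $\varkappa(\zeta,\zeta'+i')\equiv\varkappa(\zeta,\zeta')+\phi(i,\zeta)+2d_i+\langle\tilde i,\zeta+\zeta'\rangle+2p(\zeta)p(i)$; (3) $\varkappa(\lambda,-\lambda')\equiv0$.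
   Context: Setup. $I$ is a finite set with a partition $I=I_{\bar 0}\sqcup I_{\bar 1}$, $I_{\bar 1}\neq\emptyset$; $p(i)=0$ for $i\in I_{\bar0}$ and $p(i)=1$ for $i\in I_{\bar1}$. There is a symmetric $\mathbb Z$-bilinear form $\nu\cdot\nu'$ on $\mathbb Z[I]$ with $d_i:=\frac{i\cdot i}{2}\in\mathbb Z_{>0}$, $a_{ij}:=\frac{2\,i\cdot j}{i\cdot i}\in\mathbb Z_{\le 0}$ for $i\neq j$, $a_{ij}\in2\mathbb Z$ whenever $i\in I_{\bar1}$, and $d_i\equiv p(i)\pmod 2$ (hence $i\cdot j\in2\mathbb Z$). A root datum is fixed: free abelian groups $X,Y$ of finite rank with a perfect pairing $\langle\cdot,\cdot\rangle:Y\times X\to\mathbb Z$, a map $I\to Y$, $i\mapsto i$, with linearly independent image, and a map $I\to X$, $i\mapsto i'$, with $\langle i,j'\rangle=\frac{2\,i\cdot j}{i\cdot i}$. $X$-regular means the image of $i\mapsto i'$ is linearly independent. For $\nu=\sum\nu_i i\in\mathbb Z[I]$: $p(\nu)=\sum\nu_ip(i)\in\mathbb Z/2$ (identified with $\{0,1\}$ in exponents), $\tilde\nu=\sum d_i\nu_ii\in Y$, $\nu'=\sum\nu_ii'\in X$; $\tilde i=d_ii$. $X^+=\{\lambda\in X:\langle i,\lambda\rangle\ge0\ \forall i\}$. An enhancer is a function $\phi:\mathbb Z[I]\times X\to\mathbb Z$ such that, with $\equiv$ denoting congruence mod 4: (a) $\phi(\nu,\lambda+\mu')\equiv\phi(\nu,\mu')+\phi(\nu,\lambda)$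 and $\phi(\nu+\mu,\lambda)\equiv\phi(\nu,\lambda)+\phi(\mu,\lambda)$ for $\nu,\mu\in\mathbb Z[I]$, $\lambda\in X$; (b) $\phi(i,j')\in2\mathbb Z$ for $i\neq j$; (c) $\phi(i,j')-\phi(j,i')\equiv i\cdot j+2p(i)p(j)$ for $i\ne j$ and $\phi(i,i')\equiv d_i$. *)

From HB Require Import structures.
From mathcomp Require Import all_boot all_order all_algebra.
Set Implicit Arguments. Unset Strict Implicit. Unset Printing Implicit Defensive.
Import GRing.Theory Num.Theory.
Local Open Scope ring_scope.

(* X = Y = 'rV[int]_n with the standard (perfect) qd_pairing <y, x>. *)
Definition qd_pairing (n : nat) (y x : 'rV[int]_n) : int := \sum_(k < n) y 0 k * x 0 k.

Section Defs.
Variable I : finType.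

(* Z[I] is modelled by functions I -> int; N[I] by functions I -> nat. *)
Definition qd_natZ (nu : I -> nat) : I -> int := fun k => (nu k)%:Z.
Definition qd_eI (i : I) : I -> int := fun k => (k == i)%:R.
Definition qd_addZI (nu mu : I -> int) : I -> int := fun k => nu k + mu k.

(* d_i = (i.i)/2 and a_ij = 2 (i.j)/(i.i), where B i j = i.j *)
Definition qd_dI (B : I -> I -> int) (i : I) : int := (B i i %/ 2)%Z.
Definition qd_aI (B : I -> I -> int) (i j : I) : int := ((2 * B i j) %/ B i i)%Z.

(* p(nu) in Z/2, represented by 0 or 1 *)
Definition qd_parZ (p : I -> bool) (nu : I -> int) : int :=
  ((\sum_i nu i * (p i)%:R) %% 2)%Z.

(* nu' = sum nu_i i' *)
Definition qd_rootX (n : nat) (iX : I -> 'rV[int]_n) (nu : I -> int) : 'rV[int]_n :=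
  \sum_i nu i *: iX i.

Definition qd_cartan_datum (p : I -> bool) (B : I -> I -> int) : Prop :=
  [/\ forall i j, B i j = B j i,
      forall i, B i i = 2 * qd_dI B i /\ 0 < qd_dI B i,
      forall i j, i != j -> (B i i %| 2 * B i j)%Z /\ qd_aI B i j <= 0,
      forall i j, i != j -> p i -> (2 %| qd_aI B i j)%Z
    & forall i, (qd_dI B i = (p i)%:R %[mod 2])%Z].

Definition qd_lin_indep (n : nat) (v : I -> 'rV[int]_n) : Prop :=
  forall c : I -> int, \sum_i c i *: v i = 0 -> forall i, c i = 0.

Definition qd_root_datum (B : I -> I -> int) (n : nat) (iY iX : I -> 'rV[int]_n) : Prop :=
  qd_lin_indep iY /\ forall i j, qd_pairing (iY i) (iX j) = qd_aI B i j.

Definition qd_dominant (n : nat) (iY : I -> 'rV[int]_n) (lam : 'rV[int]_n) : Prop :=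
  forall i, 0 <= qd_pairing (iY i) lam.

Definition qd_is_enhancer (p : I -> bool) (B : I -> I -> int) (n : nat)
    (iX : I -> 'rV[int]_n) (phi : (I -> int) -> 'rV[int]_n -> int) : Prop :=
  [/\ forall nu mu lam,
        (phi nu (lam + qd_rootX iX mu)%R = phi nu (qd_rootX iX mu) + phi nu lam %[mod 4])%Z,
      forall nu mu lam,
        (phi (qd_addZI nu mu) lam = phi nu lam + phi mu lam %[mod 4])%Z,
      forall i j, i != j -> (2 %| phi (qd_eI i) (iX j))%Z,
      forall i j, i != j ->
        (phi (qd_eI i) (iX j) - phi (qd_eI j) (iX i) = B i j + 2 * ((p i)%:R * (p j)%:R) %[mod 4])%Z
    & forall i, (phi (qd_eI i) (iX i) = qd_dI B i %[mod 4])%Z].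
End Defs.

From HB Require Import structures.
From mathcomp Require Import all_boot all_order all_algebra.
From mathcomp Require Import ring.
From Stdlib Require Import FunctionalExtensionality ClassicalEpsilon.
Import GRing.Theory Num.Theory.
Local Open Scope ring_scope.

Set Implicit Arguments. Unset Strict Implicit.

(* By X-regularity an element [zeta = lam - nu'] of Lambda_lam determines [nu], and
   [zeta' = mu' - lam'] of V_lam' determines [mu], so it suffices to give kappa as
   an explicit function of the coordinates [(nu, mu)] in Z[I] x Z[I]:
     kappa_coord nu mu = sum_k mu_k (phi(k, lam) + 2 d_k + <~k, lam - lam'>)
                         - sum_k nu_k phi(k, mu' - lam') + Q(mu),
   where [Q] is the quadratic form with [Q(mu + i) - Q(mu) = i.mu].  Property (1)
   then holds exactly, property (3) is [kappa_coord 0 0 = 0], and property (2)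
   follows modulo 4 from three facts: [phi(x, -)] is additive along X modulo 4
   (enhancer axiom (a)), the swap rule [phi(i,k') = phi(k,i') - i.k + 2p(i)p(k)]
   (axiom (c), and [d_i = p(i) mod 2] when [i = k]), and [<~i, k'> = i.k]. *)

Section Coordinates.
Variables (I : finType) (n : nat).
Implicit Types (a b f g : I -> int) (iX : I -> 'rV[int]_n) (y x : 'rV[int]_n).

Definition wsum a f : int := \sum_k a k * f k.

Lemma wsum_addl a b f : wsum (qd_addZI a b) f = wsum a f + wsum b f.
Proof. by rewrite /wsum -big_split; apply: eq_bigr => k _; rewrite mulrDl. Qed.

Lemma wsum_addr a f g : wsum a (fun k => f k + g k) = wsum a f + wsum a g.
Proof. by rewrite /wsum -big_split; apply: eq_bigr => k _; rewrite mulrDr. Qed.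

Lemma wsum_eI i f : wsum (qd_eI i) f = f i.
Proof.
rewrite /wsum (bigD1 i) //= /qd_eI eqxx mul1r big1 ?addr0 // => k /negbTE->.
by rewrite mul0r.
Qed.

Lemma parZ_eI (p : I -> bool) i : qd_parZ p (qd_eI i) = (p i)%:R.
Proof. by rewrite /qd_parZ -/(wsum _ _) wsum_eI; case: (p i). Qed.

Lemma rootX_eI iX i : qd_rootX iX (qd_eI i) = iX i.
Proof.
rewrite /qd_rootX (bigD1 i) //= /qd_eI eqxx scale1r big1 ?addr0 // => k /negbTE->.
by rewrite scale0r.
Qed.

Lemma rootX_add iX a b : qd_rootX iX (qd_addZI a b) = qd_rootX iX a + qd_rootX iX b.
Proof. by rewrite /qd_rootX -big_split; apply: eq_bigr => k _; rewrite scalerDl. Qed.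

Lemma rootX_zero iX : qd_rootX iX (fun=> 0) = 0.
Proof. by rewrite /qd_rootX big1 // => k _; rewrite scale0r. Qed.

Lemma rootX_inj iX : qd_lin_indep iX -> injective (qd_rootX iX).
Proof.
move=> indep a b eq_ab; apply: functional_extensionality => k; apply/eqP.
rewrite -subr_eq0; apply/eqP; apply: (indep (fun k => a k - b k)).
under eq_bigr do rewrite scalerBl.
by rewrite sumrB -/(qd_rootX iX a) eq_ab subrr.
Qed.

Lemma pairingD y x1 x2 : qd_pairing y (x1 + x2) = qd_pairing y x1 + qd_pairing y x2.
Proof. by rewrite /qd_pairing -big_split; apply: eq_bigr => k _; rewrite mxE mulrDr. Qed.

Lemma pairingN y x : qd_pairing y (- x) = - qd_pairing y x.
Proof. by rewrite /qd_pairing -sumrN; apply: eq_bigr => k _; rewrite mxE mulrN. Qed.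

Lemma pairingZl (c : int) y x : qd_pairing (c *: y) x = c * qd_pairing y x.
Proof. by rewrite /qd_pairing mulr_sumr; apply: eq_bigr => k _; rewrite mxE mulrA. Qed.

Lemma pairing_rootX y iX a :
  qd_pairing y (qd_rootX iX a) = wsum a (fun k => qd_pairing y (iX k)).
Proof.
rewrite /qd_pairing /qd_rootX /wsum.
under eq_bigr do rewrite summxE mulr_sumr.
rewrite exchange_big /=; apply: eq_bigr => k _; rewrite mulr_sumr.
by apply: eq_bigr => j _; rewrite mxE mulrCA.
Qed.

End Coordinates.

(* Residues modulo 4 are computed in the ring ['Z_4], where [ring] is available. *)
Local Notation z4 x := ((x : int)%:~R : 'Z_4).

Lemma z4_eq0 x : (z4 x == 0) = (4 %| x)%Z.
Proof.
rewrite dvdzE /=; case: x => m; rewrite ?NegzE ?intrN ?oppr_eq0 /= -?pmulrn;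
  by rewrite -val_eqE /= val_Zp_nat.
Qed.

Lemma mod4P a b : (a = b %[mod 4])%Z <-> z4 a = z4 b.
Proof.
have -> : (z4 a = z4 b) <-> (z4 (a - b) == 0) by rewrite rmorphB subr_eq0; split=> /eqP.
by rewrite z4_eq0 -eqz_mod_dvd; split=> /eqP.
Qed.

Lemma z4_double a b : (a = b %[mod 2])%Z -> z4 (2 * a) = z4 (2 * b).
Proof.
move=> /eqP; rewrite eqz_mod_dvd => dvd_ab; apply/mod4P/eqP.
by rewrite eqz_mod_dvd -mulrBr (dvdz_mul (dvdzz 2) dvd_ab).
Qed.

Lemma z4_double_opp x : z4 (- (2 * x)) = z4 (2 * x).
Proof.
have four : z4 4 = 0 by apply/val_inj.
have -> : - (2 * x) = 2 * x - 4 * x by ring.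
by rewrite rmorphB !rmorphM /= four mul0r subr0.
Qed.

Lemma z4_wsum (I : finType) (a f : I -> int) :
  z4 (wsum a f) = \sum_k z4 (a k) * z4 (f k).
Proof. by rewrite rmorph_sum; apply: eq_bigr => k _; rewrite rmorphM. Qed.

Section TranslationAdditive.
Variables (n : nat) (W : zmodType) (h : 'rV[int]_n -> W).

Lemma translation_additive_scale (v : 'rV[int]_n) :
  (forall x, h (x + v) = h x + h v) -> forall c x, h (x + c *: v) = h x + h v *~ c.
Proof.
move=> hv; elim/int_rec => [|m IHm|m IHm] x.
- by rewrite scale0r addr0 mulr0z addr0.
- rewrite intS scalerDl scale1r addrCA addrC hv IHm mulrzDr mulr1z.
  by rewrite -addrA (addrC (h v *~ m)).
- have shift : x + (- m%:Z) *: v = (x + (- m.+1%:Z) *: v) + v.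
    by rewrite intS opprD scalerDl scaleN1r (addrC (- v)) addrA subrK.
  have := IHm x; rewrite shift hv => /(canRL (addrK _)) ->.
  by rewrite intS opprD mulrzDr mulrN1z addrAC addrA.
Qed.

Lemma translation_additive_span (I : finType) (v : I -> 'rV[int]_n) :
  (forall k x, h (x + v k) = h x + h (v k)) ->
  forall c x, h (x + \sum_k c k *: v k) = h x + \sum_k h (v k) *~ c k.
Proof.
move=> hv c; apply: (big_rec2 (fun s t => forall x, h (x + s) = h x + t)).
  by move=> x; rewrite !addr0.
move=> k s t _ IH x.
rewrite addrCA addrC translation_additive_scale // IH.
by rewrite -addrA (addrC t).
Qed.
End TranslationAdditive.

Section CartanDatum.
Variables (I : finType) (p : I -> bool) (B : I -> I -> int) (n : nat)
  (iY iX : I -> 'rV[int]_n).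
Hypothesis HC : qd_cartan_datum p B.

Lemma d_times_a i k : qd_dI B i * qd_aI B i k = B i k.
Proof.
case: HC => _ Hd Ha _ _; have [Bii d_gt0] := Hd i.
have Bii_neq0 : B i i != 0 by rewrite Bii mulf_neq0 // lt0r_neq0.
have [<-|neq_ik] := eqVneq i k; first by rewrite /qd_aI mulzK // Bii mulrC.
have [dvd_Bii _] := Ha i k neq_ik.
apply: (@mulfI _ 2) => //; rewrite mulrA -Bii mulrC.
by rewrite /qd_aI divzK.
Qed.

Lemma pairing_tilde (HR : qd_root_datum B iY iX) i a :
  qd_pairing (qd_dI B i *: iY i) (qd_rootX iX a) = wsum a (B i).
Proof.
case: HR => _ Hpair; rewrite pairing_rootX; apply: eq_bigr => k _.
by rewrite pairingZl Hpair d_times_a.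
Qed.

(* [i.i = 2 d_i = 2 p(i) mod 4], since [d_i = p(i) mod 2]. *)
Lemma self_pairing_mod4 i : z4 (B i i) = z4 (2 * (p i)%:R).
Proof.
case: HC => _ Hd _ _ Hpar; have [-> _] := Hd i.
exact: z4_double.
Qed.
End CartanDatum.

Section Enhancer.
Variables (I : finType) (p : I -> bool) (B : I -> I -> int) (n : nat)
  (iX : I -> 'rV[int]_n) (phi : (I -> int) -> 'rV[int]_n -> int).
Hypothesis Hphi : qd_is_enhancer p B iX phi.

Lemma enhancer_shift x lam mu :
  z4 (phi x (lam + qd_rootX iX mu)) = z4 (phi x lam) + z4 (phi x (qd_rootX iX mu)).
Proof. by case: Hphi => shift _ _ _ _; rewrite [RHS]addrC -rmorphD; apply/mod4P/shift. Qed.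

Lemma enhancer_linear x lam nu :
  z4 (phi x (lam + qd_rootX iX nu)) = z4 (phi x lam) + z4 (wsum nu (fun k => phi x (iX k))).
Proof.
rewrite z4_wsum (translation_additive_span (h := fun v => z4 (phi x v))).
  by congr (_ + _); apply: eq_bigr => k _; rewrite -mulrzr mulrC.
by move=> k v; rewrite -(rootX_eI iX k) enhancer_shift.
Qed.

Lemma enhancer_swap (HC : qd_cartan_datum p B) i k :
  (phi (qd_eI i) (iX k) = phi (qd_eI k) (iX i) - B i k + 2 * (p i)%:R * (p k)%:R %[mod 4])%Z.
Proof.
apply/mod4P.
have [<-|neq_ik] := eqVneq i k.
  rewrite rmorphD rmorphB /= (self_pairing_mod4 HC) -mulrA !rmorphM /=.
  by case: (p i); rewrite /= ?rmorph0 ?rmorph1; ring.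
have [HB _ _ _ _] := HC; case: Hphi => _ _ _ Hc _.
have := Hc k i; rewrite eq_sym neq_ik HB => /(_ isT) /mod4P.
rewrite rmorphB /= [_ * (p i)%:R]mulrC => swap_ki.
have -> : z4 (phi (qd_eI i) (iX k))
    = z4 (phi (qd_eI k) (iX i)) - z4 (B i k + 2 * ((p i)%:R * (p k)%:R)).
  by rewrite -swap_ki; ring.
rewrite -mulrA [RHS]rmorphD /= -z4_double_opp !rmorphD !rmorphN /=.
ring.
Qed.
End Enhancer.

Section QuadraticForm.
Variables (I : finType) (B : I -> I -> int).
Hypothesis HB : forall i j, B i j = B j i.

Definition bform (a b : I -> int) : int := wsum a (fun k => wsum b (B k)).

(* [qform mu = sum_{k<l} mu_k mu_l k.l + sum_k binom(mu_k, 2) k.k], written as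
   [(bform mu mu - sum_k mu_k k.k) / 2]; only its increments matter below. *)
Definition qform (mu : I -> int) : int :=
  ((bform mu mu - wsum mu (fun k => B k k)) %/ 2)%Z.

(* [Q(mu + e_i) = i.mu + Q(mu)]: the numerator grows by [2 i.mu]. *)
Lemma qform_step mu i : qform (qd_addZI mu (qd_eI i)) = wsum mu (B i) + qform mu.
Proof.
have inner : (fun k => wsum (qd_addZI mu (qd_eI i)) (B k)) = (fun k => wsum mu (B k) + B k i).
  by apply: functional_extensionality => k; rewrite wsum_addl wsum_eI.
have col : wsum mu (fun k => B k i) = wsum mu (B i).
  by apply: eq_bigr => k _; rewrite HB.
rewrite /qform /bform inner !wsum_addl !wsum_eI wsum_addr col.
rewrite -/(bform mu mu) -divzMDl //; congr (_ %/ _)%Z; ring.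
Qed.

Lemma qform0 : qform (fun=> 0) = 0.
Proof. by rewrite /qform /bform /wsum !big1 // => k _; rewrite mul0r. Qed.
End QuadraticForm.

Section Kappa.
Variables (I : finType) (p : I -> bool) (B : I -> I -> int) (n : nat)
  (iY iX : I -> 'rV[int]_n) (phi : (I -> int) -> 'rV[int]_n -> int)
  (lam lam' : 'rV[int]_n).
Hypothesis HC : qd_cartan_datum p B.
Hypothesis HR : qd_root_datum B iY iX.
Hypothesis Hphi : qd_is_enhancer p B iX phi.

Local Notation tilde i := (qd_dI B i *: iY i).

(* [kappa_coord nu mu] is the value of kappa at [(lam - nu', mu' - lam')]. *)
Definition kappa_coord (nu mu : I -> int) : int :=
  wsum mu (fun k => phi (qd_eI k) lam + 2 * qd_dI B k + qd_pairing (tilde k) (lam - lam'))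
  - wsum nu (fun k => phi (qd_eI k) (qd_rootX iX mu - lam'))
  + qform B mu.

Lemma kappa_coord_origin : kappa_coord (fun=> 0) (fun=> 0) = 0.
Proof. by rewrite /kappa_coord qform0 /wsum !big1 ?subrr ?addr0 // => k _; rewrite mul0r. Qed.

Lemma kappa_coord_nu nu mu i :
  kappa_coord (qd_addZI nu (qd_eI i)) mu
  = kappa_coord nu mu - phi (qd_eI i) (qd_rootX iX mu - lam').
Proof. by rewrite /kappa_coord wsum_addl wsum_eI; ring. Qed.

Lemma kappa_coord_mu nu mu i :
  let zeta := lam - qd_rootX iX nu in
  let zeta' := qd_rootX iX mu - lam' in
  z4 (kappa_coord nu (qd_addZI mu (qd_eI i)))
  = z4 (kappa_coord nu mu + phi (qd_eI i) zeta + 2 * qd_dI B i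
        + qd_pairing (tilde i) (zeta + zeta') + 2 * qd_parZ p nu * qd_parZ p (qd_eI i)).
Proof.
move=> zeta zeta'; have [HB _ _ _ _] := HC.
have shift_sum : z4 (wsum nu (fun k => phi (qd_eI k) (zeta' + qd_rootX iX (qd_eI i))))
    = z4 (wsum nu (fun k => phi (qd_eI k) zeta')) + z4 (wsum nu (fun k => phi (qd_eI k) (iX i))).
  rewrite !z4_wsum -big_split; apply: eq_bigr => k _ /=.
  by rewrite (enhancer_shift Hphi) rootX_eI mulrDr.
have linear : z4 (phi (qd_eI i) lam)
    = z4 (phi (qd_eI i) zeta) + z4 (wsum nu (fun k => phi (qd_eI i) (iX k))).
  by rewrite -(enhancer_linear Hphi) subrK.
have swap : z4 (wsum nu (fun k => phi (qd_eI i) (iX k)))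
    = z4 (wsum nu (fun k => phi (qd_eI k) (iX i))) - z4 (wsum nu (B i))
      + z4 2 * z4 (p i)%:R * z4 (wsum nu (fun k => (p k)%:R)).
  rewrite !z4_wsum mulr_sumr -sumrB -big_split; apply: eq_bigr => k _ /=.
  have /mod4P -> := enhancer_swap Hphi HC i k.
  by rewrite !rmorphD !rmorphN !rmorphM /=; ring.
have pairing_sum : qd_pairing (tilde i) (zeta + zeta')
    = qd_pairing (tilde i) (lam - lam') - wsum nu (B i) + wsum mu (B i).
  by rewrite !pairingD !pairingN !(pairing_tilde HC HR); ring.
have parity : z4 (2 * qd_parZ p nu * qd_parZ p (qd_eI i))
    = z4 2 * z4 (wsum nu (fun k => (p k)%:R)) * z4 (p i)%:R.
  by rewrite rmorphM /= parZ_eI /qd_parZ (z4_double (modz_mod _ _)) rmorphM.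
rewrite /kappa_coord.
have -> : qd_rootX iX (qd_addZI mu (qd_eI i)) - lam' = zeta' + qd_rootX iX (qd_eI i).
  by rewrite rootX_add addrAC.
rewrite wsum_addl wsum_eI qform_step // pairing_sum.
rewrite !rmorphD !rmorphN /= parity shift_sum linear swap.
ring.
Qed.
End Kappa.

Lemma injective_has_left_inverse (A C : Type) (a0 : A) (f : A -> C) :
  injective f -> exists g : C -> A, cancel f g.
Proof.
move=> f_inj; exists (fun c => epsilon (inhabits a0) (fun a => f a = c)) => a.
apply: f_inj; exact: (epsilon_spec (inhabits a0) (fun a' => f a' = f a) (ex_intro _ a erefl)).
Qed.

Theorem mainTheorem19 (I : finType) (p : I -> bool) (B : I -> I -> int) (n : nat)
    (iY iX : I -> 'rV[int]_n) (phi : (I -> int) -> 'rV[int]_n -> int)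
    (Hodd : exists i, p i) (HC : qd_cartan_datum p B) (HR : qd_root_datum B iY iX)
    (HXreg : qd_lin_indep iX) (Hphi : qd_is_enhancer p B iX phi)
    (lam lam' : 'rV[int]_n) (Hlam : qd_dominant iY lam) (Hlam' : qd_dominant iY lam') :
  exists kappa : 'rV[int]_n -> 'rV[int]_n -> int,
    (forall (i : I) (nu mu : I -> nat),
       let zeta := lam - qd_rootX iX (qd_natZ nu) in
       let zeta' := qd_rootX iX (qd_natZ mu) - lam' in
       (kappa (zeta - iX i)%R zeta' = kappa zeta zeta' - phi (qd_eI i) zeta' %[mod 4])%Z /\
       (kappa zeta (zeta' + iX i)%R =
          kappa zeta zeta' + phi (qd_eI i) zeta + 2 * qd_dI B i
          + qd_pairing (qd_dI B i *: iY i) (zeta + zeta')%R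
          + 2 * qd_parZ p (qd_natZ nu) * qd_parZ p (qd_eI i) %[mod 4])%Z)
    /\ (kappa lam (- lam')%R = 0 %[mod 4])%Z.
Proof.
have [nu_of nu_ofK] : exists g, cancel (fun nu => lam - qd_rootX iX nu) g.
  apply: (injective_has_left_inverse (fun=> 0)) => a b /addrI /oppr_inj.
  exact: (rootX_inj HXreg).
have [mu_of mu_ofK] : exists g, cancel (fun mu => qd_rootX iX mu - lam') g.
  apply: (injective_has_left_inverse (fun=> 0)) => a b /addIr.
  exact: (rootX_inj HXreg).
exists (fun zeta zeta' => kappa_coord B iY iX phi lam lam' (nu_of zeta) (mu_of zeta')).
split=> [i nu mu zeta zeta' | ]; last first.
  have -> : lam = lam - qd_rootX iX (fun=> 0) by rewrite rootX_zero subr0.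
  by rewrite -[- lam']add0r -(rootX_zero iX) nu_ofK mu_ofK kappa_coord_origin.
have -> : zeta - iX i = lam - qd_rootX iX (qd_addZI (qd_natZ nu) (qd_eI i)).
  by rewrite rootX_add rootX_eI opprD addrA.
have -> : zeta' + iX i = qd_rootX iX (qd_addZI (qd_natZ mu) (qd_eI i)) - lam'.
  by rewrite rootX_add rootX_eI addrAC.
rewrite /zeta /zeta' !nu_ofK !mu_ofK kappa_coord_nu; split=> //.
by apply/mod4P; apply: kappa_coord_mu.
Qed.
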